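(* Let $k$ be a field of characteristic zero, $a\in k[h]$ a non-constant polynomial, $h_0\in k\setminus\{0\}$, $\sigma\in\mathrm{Aut}_k(k[h])$ given by $\sigma(h)=h-h_0$, and $A=A(k[h],a,\sigma)$ the generalized Weyl algebra. Let $r\geq 1$ and let $w\in k$ be a primitive $r$-th root of unity, and let $G=\mathbb{Z}/r\mathbb{Z}$ act on $A$ by powers of the automorphism $\theta_w$ of $A$ determined by $\theta_w(x)=wx$, $\theta_w(y)=w^{-1}y$, $\theta_w(h)=h$. Then the subalgebra of invariants $A^G$ is isomorphic to the generalized Weyl algebra $A(k[H],\tilde a,\tau)$, where $\tau\in\mathrm{Aut}_k(k[H])$ is given by $\tau(H)=H-h_0$ and \[\tilde a(H)=\sigma^{-r+1}(a)(rH)\cdots\sigma^{-1}(a)(rH)\,a(rH),\] i.e. $\tilde a(H)=\prod_{i=0}^{r-1}(\sigma^{-i}(a))(rH)$, where $(\sigma^{-i}(a))(rH)$ denotes the polynomial $\sigma^{-i}(a)\in k[h]$ evaluated at $h=rH$. (Under the isomorphism, $H$ corresponds to $h/r$, and the generators $X,Y$ of the generalized Weyl algebra correspond to $x^r,y^r$.)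
   Context: For a $k$-algebra $R$, a central element $a\in R$ and $\sigma\in\mathrm{Aut}_k(R)$, the generalized Weyl algebra $A(R,a,\sigma)$ is the $k$-algebra generated by $R$ and two new variables $x,y$ subject to the relations $yx=a$, $xy=\sigma(a)$, $xr=\sigma(r)x$ and $ry=y\sigma(r)$ for all $r\in R$. *)

From HB Require Import structures.
From mathcomp Require Import all_boot all_order all_algebra.
Set Implicit Arguments. Unset Strict Implicit. Unset Printing Implicit Defensive.
Import Order.TTheory GRing.Theory Num.Theory.
Local Open Scope ring_scope.

Definition is_kalg_hom (k : fieldType) (A C : algType k) (f : A -> C) : Prop :=
  [/\ forall u v, f (u + v) = f u + f v,
      forall (c : k) u, f (c *: u) = c *: f u,
      forall u v, f (u * v) = f u * f v
    & f 1 = 1].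

Definition gwa_rel (k : fieldType) (R : algType k) (a : R) (s : R -> R)
  (C : algType k) (f : R -> C) (x y : C) : Prop :=
  [/\ is_kalg_hom f,
      y * x = f a,
      x * y = f (s a),
      forall r, x * f r = f (s r) * x
    & forall r, f r * y = y * f (s r)].

(* (A, iota, x, y) is THE generalized Weyl algebra A(R,a,s): the k-algebra
   generated by R and x, y subject to the relations above, characterized
   (up to unique isomorphism) by its universal property. *)
Definition is_GWA (k : fieldType) (R : algType k) (a : R) (s : R -> R)
  (A : algType k) (iota : R -> A) (x y : A) : Prop :=
  gwa_rel a s iota x y /\
  forall (C : algType k) (f : R -> C) (x' y' : C),
    gwa_rel a s f x' y' ->
    (exists g : A -> C,
        [/\ is_kalg_hom g, forall r, g (iota r) = f r, g x = x' & g y = y'])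
    /\ (forall g1 g2 : A -> C,
          is_kalg_hom g1 -> (forall r, g1 (iota r) = f r) -> g1 x = x' -> g1 y = y' ->
          is_kalg_hom g2 -> (forall r, g2 (iota r) = f r) -> g2 x = x' -> g2 y = y' ->
          g1 =1 g2).

Definition shift_sigma (k : fieldType) (h0 : k) (p : {poly k}) : {poly k} :=
  p \Po ('X - h0%:P).

Definition shift_sigma_inv (k : fieldType) (h0 : k) (p : {poly k}) : {poly k} :=
  p \Po ('X + h0%:P).

Definition a_tilde (k : fieldType) (h0 : k) (r : nat) (a : {poly k}) : {poly k} :=
  \prod_(i < r) ((iter i (shift_sigma_inv h0) a) \Po (r%:R *: 'X)).

(* The elements iota (p (h / r)), x^r and y^r of A satisfy the defining relations
   of A(k[H], a~, tau): y^r x^r = a sigma^-1(a) ... sigma^(1-r)(a) is a~(h / r),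
   x^r y^r is its image under sigma^r, and sigma^r (p (h / r)) = (tau p)(h / r).
   The universal property of B therefore yields phi, whose image is fixed by theta
   since theta fixes these generators.  Every element of A is a sum of monomials
   p x^n and p y^n, on which theta acts by w^n and w^-n; the Reynolds operator
   (1/r) sum_i theta^i fixes the invariants and sends such a monomial to 0 unless
   r | n, in which case it is the image of p(r H) X^(n/r) (resp. Y^(n/r)).
   Finally phi is injective because the monomials p x^n and p y^(n+1) are linearly
   independent over k[h], as their action on the delta function at 0 in the
   representation of A on k[h]^Z shows. *)

From HB Require Import structures.
From mathcomp Require Import all_boot all_order all_algebra.
From mathcomp Require Import zify boolp functions.
Set Implicit Arguments. Unset Strict Implicit. Unset Printing Implicit Defensive.
Import Order.TTheory GRing.Theory Num.Theory.
Local Open Scope ring_scope.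

Section KalgHom.
Variables (k : fieldType) (A C : algType k) (f : A -> C).
Hypothesis f_hom : is_kalg_hom f.

Lemma kalg_homD u v : f (u + v) = f u + f v. Proof. by case: f_hom. Qed.
Lemma kalg_homZ c u : f (c *: u) = c *: f u. Proof. by case: f_hom. Qed.
Lemma kalg_homM u v : f (u * v) = f u * f v. Proof. by case: f_hom. Qed.
Lemma kalg_hom1 : f 1 = 1. Proof. by case: f_hom. Qed.
Lemma kalg_hom0 : f 0 = 0.
Proof. by rewrite -(scale0r (0 : A)) kalg_homZ scale0r. Qed.
Lemma kalg_homB u v : f (u - v) = f u - f v.
Proof. by rewrite kalg_homD -scaleN1r kalg_homZ scaleN1r. Qed.
Lemma kalg_homX u n : f (u ^+ n) = f u ^+ n.
Proof. by elim: n => [|n IH]; rewrite ?kalg_hom1 // !exprS kalg_homM IH. Qed.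
Lemma kalg_hom_sum I (s : seq I) (F : I -> A) :
  f (\sum_(i <- s) F i) = \sum_(i <- s) f (F i).
Proof.
by elim: s => [|i s IH]; rewrite ?big_nil ?kalg_hom0 // !big_cons kalg_homD IH.
Qed.
End KalgHom.

Lemma kalg_hom_comp (k : fieldType) (A B C : algType k) (f : A -> B) (g : B -> C) :
  is_kalg_hom f -> is_kalg_hom g -> is_kalg_hom (g \o f).
Proof.
move=> hf hg; split=> [u v|c u|u v|] /=;
  by rewrite ?(kalg_homD hf, kalg_homZ hf, kalg_homM hf, kalg_hom1 hf,
               kalg_homD hg, kalg_homZ hg, kalg_homM hg, kalg_hom1 hg).
Qed.

Lemma kalg_hom_id (k : fieldType) (A : algType k) : is_kalg_hom (@id A).
Proof. by []. Qed.

Lemma kalg_hom_iter (k : fieldType) (A : algType k) (f : A -> A) n :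
  is_kalg_hom f -> is_kalg_hom (iter n f).
Proof.
by move=> hf; elim: n => [|n IH]; [exact: kalg_hom_id | exact: kalg_hom_comp IH hf].
Qed.

Lemma kalg_hom_poly_eq (k : fieldType) (A : algType k) (f g : {poly k} -> A) :
  is_kalg_hom f -> is_kalg_hom g -> f 'X = g 'X -> f =1 g.
Proof.
move=> hf hg fgX p; rewrite -[p]coefK poly_def !(kalg_hom_sum hf, kalg_hom_sum hg).
apply: eq_bigr => i _.
by rewrite (kalg_homZ hf) (kalg_homZ hg) (kalg_homX hf) (kalg_homX hg) fgX.
Qed.

Lemma comp_poly_kalg_hom (k : fieldType) (q : {poly k}) : is_kalg_hom (comp_poly q).
Proof. by split=> [u v|c u|u v|]; rewrite ?rmorph1 ?linearD ?linearZ ?rmorphM. Qed.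

Section Shift.
Variable k : fieldType.

Lemma shift_sigmaK (h0 : k) : cancel (shift_sigma h0) (shift_sigma_inv h0).
Proof.
move=> p; rewrite /shift_sigma_inv /shift_sigma -comp_polyA comp_polyB comp_polyX.
by rewrite comp_polyC addrK comp_polyXr.
Qed.

Lemma shift_sigma_invK (h0 : k) : cancel (shift_sigma_inv h0) (shift_sigma h0).
Proof. by move=> p; apply: comp_polyXaddC_K. Qed.

Lemma shift_sigmaM (h0 : k) : {morph shift_sigma h0 : p q / p * q}.
Proof. by move=> p q; apply: comp_polyM. Qed.

Lemma shift_sigma_invM (h0 : k) : {morph shift_sigma_inv h0 : p q / p * q}.
Proof. by move=> p q; apply: comp_polyM. Qed.

Lemma iter_shift_sigma (h0 : k) n : iter n (shift_sigma h0) =1 shift_sigma (n%:R * h0).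
Proof.
elim: n => [|n IH] p /=; first by rewrite /shift_sigma mul0r subr0 comp_polyXr.
rewrite IH /shift_sigma -comp_polyA comp_polyB comp_polyX comp_polyC; congr (p \Po _).
by rewrite mulrSr mulrDl mul1r polyCD opprD addrA addrAC.
Qed.

Lemma shift_sigma_dilate (h0 c : k) p : c != 0 ->
  shift_sigma h0 p \Po (c *: 'X) = shift_sigma (h0 / c) (p \Po (c *: 'X)).
Proof.
move=> c_neq0; rewrite /shift_sigma -!comp_polyA; congr (p \Po _).
rewrite comp_polyB comp_polyX comp_polyC comp_polyZ comp_polyX scalerBr.
by rewrite scale_polyC mulrCA divff // mulr1.
Qed.

Lemma dilateK (c : k) : c != 0 -> cancel (comp_poly (c *: 'X)) (comp_poly (c^-1 *: 'X)).
Proof.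
move=> c_neq0 p; rewrite -comp_polyA comp_polyZ comp_polyX scalerA.
by rewrite divff // scale1r comp_polyXr.
Qed.

Lemma dilate_eq0 (c : k) p : c != 0 -> (p \Po (c *: 'X) == 0) = (p == 0).
Proof. by move=> c_neq0; rewrite comp_poly2_eq0 // size_scale ?size_polyX. Qed.

Definition shift_prod (h0 : k) (a : {poly k}) n :=
  \prod_(i < n) iter i (shift_sigma_inv h0) a.

Lemma shift_prodS (h0 : k) a n :
  shift_prod h0 a n.+1 = a * shift_sigma_inv h0 (shift_prod h0 a n).
Proof.
rewrite /shift_prod big_ord_recl /shift_sigma_inv rmorph_prod.
by congr (_ * _); apply: eq_bigr => i _; rewrite iterSr.
Qed.

Lemma shift_prod_neq0 (h0 : k) a n : a != 0 -> shift_prod h0 a n != 0.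
Proof.
move=> a_neq0; rewrite prodf_seq_neq0; apply/allP => i _.
elim: (nat_of_ord i) => [|j IH] //=.
by rewrite /shift_sigma_inv comp_poly2_eq0 // size_XaddC.
Qed.

Lemma a_tilde_dilate (h0 : k) (r : nat) a : r%:R != 0 :> k ->
  a_tilde h0 r a \Po (r%:R^-1 *: 'X) = shift_prod h0 a r.
Proof.
move=> r_neq0; rewrite /a_tilde rmorph_prod.
by apply: eq_bigr => i _; rewrite /= dilateK.
Qed.

End Shift.

Lemma sum_expr_root1 (k : fieldType) (c : k) n : c ^+ n = 1 ->
  \sum_(i < n) c ^+ i = if c == 1 then n%:R else 0.
Proof.
move=> cn1; case: eqP => [->|/eqP c_neq1].
  by rewrite (eq_bigr (fun=> 1)) => [|i _]; rewrite ?expr1n // sumr_const card_ord.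
apply/eqP; have := subrX1 c n; rewrite cn1 subrr => /esym/eqP.
by rewrite mulf_eq0 subr_eq0 (negbTE c_neq1).
Qed.

Section Reynolds.
Variables (k : fieldType) (A : algType k) (theta : A -> A) (r : nat).
Hypothesis theta_hom : is_kalg_hom theta.
Hypothesis r_neq0 : r%:R != 0 :> k.

Definition reynolds z := r%:R^-1 *: \sum_(i < r) iter i theta z.

Lemma reynolds0 : reynolds 0 = 0.
Proof.
by rewrite /reynolds big1 ?scaler0 // => i _; rewrite (kalg_hom0 (kalg_hom_iter i theta_hom)).
Qed.

Lemma reynoldsD u v : reynolds (u + v) = reynolds u + reynolds v.
Proof.
rewrite /reynolds -scalerDr -big_split; congr (_ *: _); apply: eq_bigr => i _.
exact: (kalg_homD (kalg_hom_iter i theta_hom)).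
Qed.

Lemma reynolds_fixed z : (forall i : 'I_r, iter i theta z = z) -> reynolds z = z.
Proof.
move=> z_fixed; rewrite /reynolds (eq_bigr (fun=> z)) // sumr_const card_ord.
by rewrite -scaler_nat scalerA mulVf // scale1r.
Qed.

Lemma reynolds_eigen (c : k) z : c ^+ r = 1 ->
  (forall i, iter i theta z = c ^+ i *: z) -> reynolds z = if c == 1 then z else 0.
Proof.
move=> cr1 z_eigen; rewrite /reynolds (eq_bigr (fun i : 'I_r => c ^+ i *: z)) //.
rewrite -scaler_suml sum_expr_root1 // scalerA.
by case: eqP => _; rewrite ?mulVf ?scale1r ?mulr0 ?scale0r.
Qed.

Lemma iter_eigen u c i : theta u = c *: u -> iter i theta u = c ^+ i *: u.
Proof.
move=> u_eigen; elim: i => [|i IH]; first by rewrite scale1r.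
by rewrite iterS IH (kalg_homZ theta_hom) u_eigen scalerA -exprSr.
Qed.

End Reynolds.

Section LinearEndomorphisms.
Variable k : fieldType.

Definition gwa_module := int -> {poly k}.

Record lendo := LEndo {
  lendo_fun :> gwa_module -> gwa_module;
  lendo_linear : linear lendo_fun
}.

HB.instance Definition _ (f : lendo) :=
  GRing.isLinear.Build k gwa_module gwa_module *:%R f (lendo_linear f).
HB.instance Definition _ := gen_eqMixin lendo.
HB.instance Definition _ := gen_choiceMixin lendo.

Lemma lendoP (f g : lendo) : f =1 g -> f = g.
Proof.
case: f g => [f lf] [g lg] /= /funext fg; subst g; congr LEndo; exact: Prop_irrelevance.
Qed.

Fact lendo0_linear : linear (fun _ : gwa_module => 0 : gwa_module).
Proof. by move=> c u v; rewrite scaler0 addr0. Qed.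
Fact lendo_add_linear (f g : lendo) : linear (fun u => f u + g u).
Proof. by move=> c u v; rewrite !linearP scalerDr addrACA. Qed.
Fact lendo_opp_linear (f : lendo) : linear (fun u => - f u).
Proof. by move=> c u v; rewrite linearP opprD scalerN. Qed.
Fact lendo_scale_linear c (f : lendo) : linear (fun u => c *: f u).
Proof. by move=> c' u v; rewrite linearP scalerDr !scalerA mulrC. Qed.
Fact lendo1_linear : linear (@id gwa_module).
Proof. by []. Qed.
Fact lendo_mul_linear (f g : lendo) : linear (f \o g).
Proof. by move=> c u v /=; rewrite !linearP. Qed.

Definition lendo0 := LEndo lendo0_linear.
Definition lendo_add f g := LEndo (lendo_add_linear f g).
Definition lendo_opp f := LEndo (lendo_opp_linear f).
Definition lendo_scale c f := LEndo (lendo_scale_linear c f).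
Definition lendo1 := LEndo lendo1_linear.
Definition lendo_mul f g := LEndo (lendo_mul_linear f g).

Fact lendo_addA : associative lendo_add.
Proof. by move=> f g h; apply: lendoP => u /=; rewrite addrA. Qed.
Fact lendo_addC : commutative lendo_add.
Proof. by move=> f g; apply: lendoP => u /=; rewrite addrC. Qed.
Fact lendo_add0 : left_id lendo0 lendo_add.
Proof. by move=> f; apply: lendoP => u /=; rewrite add0r. Qed.
Fact lendo_addN : left_inverse lendo0 lendo_opp lendo_add.
Proof. by move=> f; apply: lendoP => u /=; rewrite addNr. Qed.
HB.instance Definition _ :=
  GRing.isZmodule.Build lendo lendo_addA lendo_addC lendo_add0 lendo_addN.

Fact lendo_mulA : associative lendo_mul. Proof. by move=> f g h; apply: lendoP. Qed.
Fact lendo_mul1 : left_id lendo1 lendo_mul. Proof. by move=> f; apply: lendoP. Qed.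
Fact lendo_mulr1 : right_id lendo1 lendo_mul. Proof. by move=> f; apply: lendoP. Qed.
Fact lendo_mulDl : left_distributive lendo_mul +%R.
Proof. by move=> f g h; apply: lendoP. Qed.
Fact lendo_mulDr : right_distributive lendo_mul +%R.
Proof. by move=> f g h; apply: lendoP => u /=; rewrite linearD. Qed.
Fact lendo1_neq0 : lendo1 != 0.
Proof.
apply/eqP => /(congr1 (fun f : lendo => f (fun _ => 1) 0)) /= /eqP.
by rewrite oner_eq0.
Qed.
HB.instance Definition _ := GRing.Zmodule_isNzRing.Build lendo
  lendo_mulA lendo_mul1 lendo_mulr1 lendo_mulDl lendo_mulDr lendo1_neq0.

Fact lendo_scaleA a b f : lendo_scale a (lendo_scale b f) = lendo_scale (a * b) f.
Proof. by apply: lendoP => u /=; rewrite scalerA. Qed.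
Fact lendo_scale1 : left_id 1 lendo_scale.
Proof. by move=> f; apply: lendoP => u /=; rewrite scale1r. Qed.
Fact lendo_scaleDr : right_distributive lendo_scale +%R.
Proof. by move=> c f g; apply: lendoP => u /=; rewrite scalerDr. Qed.
Fact lendo_scaleDl f : {morph lendo_scale^~ f : a b / a + b}.
Proof. by move=> a b; apply: lendoP => u /=; rewrite scalerDl. Qed.
HB.instance Definition _ := GRing.Zmodule_isLmodule.Build k lendo
  lendo_scaleA lendo_scale1 lendo_scaleDr lendo_scaleDl.

Fact lendo_scaleAl c (f g : lendo) : c *: (f * g) = (c *: f) * g.
Proof. exact: lendoP. Qed.
HB.instance Definition _ := GRing.Lmodule_isLalgebra.Build k lendo lendo_scaleAl.
Fact lendo_scaleAr c (f g : lendo) : c *: (f * g) = f * (c *: g).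
Proof. by apply: lendoP => u /=; rewrite linearZ. Qed.
HB.instance Definition _ := GRing.Lalgebra_isAlgebra.Build k lendo lendo_scaleAr.

Lemma lendoDE (f g : lendo) u n : (f + g) u n = f u n + g u n.
Proof. by []. Qed.

Lemma lendo_sumE I (s : seq I) (F : I -> lendo) u n :
  (\sum_(i <- s) F i) u n = \sum_(i <- s) F i u n.
Proof. by elim: s => [|i s IH]; rewrite ?big_nil ?big_cons //= -IH. Qed.

End LinearEndomorphisms.

Section StandardModule.
Variables (k : fieldType) (h0 : k) (a : {poly k}).

Fact model_h_linear p : linear (fun (u : gwa_module k) n => p * u n).
Proof. by move=> c u v; apply/funext => n; rewrite !fctE /= mulrDr scalerAr. Qed.
Fact model_x_linear : linear (fun (u : gwa_module k) n => shift_sigma h0 (u (n - 1))).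
Proof. by move=> c u v; apply/funext => n; rewrite !fctE /= /shift_sigma linearP. Qed.
Fact model_y_linear :
  linear (fun (u : gwa_module k) n => a * shift_sigma_inv h0 (u (n + 1))).
Proof.
by move=> c u v; apply/funext => n; rewrite !fctE /= /shift_sigma_inv linearP mulrDr scalerAr.
Qed.

Definition model_h p := LEndo (model_h_linear p).
Definition model_x := LEndo model_x_linear.
Definition model_y := LEndo model_y_linear.

Lemma model_rel : gwa_rel a (shift_sigma h0) model_h model_x model_y.
Proof.
split.
- split=> [p q|c p|p q|]; apply: lendoP => u; apply/funext => n /=.
  + by rewrite mulrDl.
  + by rewrite -scalerAl.
  + by rewrite mulrA.
  + by rewrite mul1r.
- by apply: lendoP => u; apply/funext => n /=; rewrite shift_sigmaK addrK.
- apply: lendoP => u; apply/funext => n /=.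
  by rewrite shift_sigmaM shift_sigma_invK subrK.
- move=> p; apply: lendoP => u; apply/funext => n /=.
  by rewrite shift_sigmaM.
- move=> p; apply: lendoP => u; apply/funext => n /=.
  by rewrite shift_sigma_invM shift_sigmaK mulrCA.
Qed.

Definition delta0 : gwa_module k := fun n => if n == 0 then 1 else 0.

Lemma model_xX_delta0 n :
  (model_x ^+ n) delta0 = fun m => if m == n%:Z then 1 else 0.
Proof.
elim: n => [|n IH] //; rewrite exprS /= IH; apply/funext => m /=.
rewrite subr_eq -addn1 PoszD.
by case: ifP => _; rewrite /shift_sigma ?comp_polyC ?comp_poly0.
Qed.

Lemma model_yX_delta0 n :
  (model_y ^+ n) delta0 = fun m => if m == - n%:Z then shift_prod h0 a n else 0.
Proof.
elim: n => [|n IH].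
  by apply/funext => m; rewrite oppr0 /shift_prod big_ord0.
rewrite exprS /= IH; apply/funext => m /=.
have -> : (m + 1 == - n%:Z) = (m == - n.+1%:Z) by apply/eqP/eqP; lia.
by case: ifP => _; rewrite /shift_sigma_inv ?comp_poly0 ?mulr0 // shift_prodS.
Qed.

Lemma model_monoX p n :
  (model_h p * model_x ^+ n) delta0 = fun m => if m == n%:Z then p else 0.
Proof.
apply/funext => m; rewrite [LHS]/= model_xX_delta0 /=.
by case: eqP; rewrite ?mulr1 ?mulr0.
Qed.

Lemma model_monoY p n :
  (model_h p * model_y ^+ n) delta0 =
  fun m => if m == - n%:Z then p * shift_prod h0 a n else 0.
Proof.
apply/funext => m; rewrite [LHS]/= model_yX_delta0 /=.
by case: eqP; rewrite ?mulr0.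
Qed.

End StandardModule.

Section GWAInduction.
Variables (k : fieldType) (R : algType k) (a : R) (s : R -> R).
Variables (A : algType k) (iota : R -> A) (x y : A).
Hypothesis A_gwa : is_GWA a s iota x y.
Variable P : A -> Prop.
Hypotheses (P1 : P 1) (PD : forall u v, P u -> P v -> P (u + v))
  (PM : forall u v, P u -> P v -> P (u * v)) (PZ : forall c u, P u -> P (c *: u))
  (Piota : forall r, P (iota r)) (Px : P x) (Py : P y).

Let P_pred : pred A := fun z => `[< P z >].

Fact P_subalg_closed : GRing.subsemialg_closed P_pred.
Proof.
have P0 : P 0 by rewrite -(scale0r 1); apply: PZ.
split; [exact/asboolP| split; [exact/asboolP|] | |].
- by move=> u v /asboolP Pu /asboolP Pv; apply/asboolP; apply: PD.
- by move=> c u /asboolP Pu; apply/asboolP; apply: PZ.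
- by move=> u v /asboolP Pu /asboolP Pv; apply/asboolP; apply: PM.
Qed.

Record gen := Gen { gen_val :> A; _ : P_pred gen_val }.
HB.instance Definition _ := [isSub for gen_val].
HB.instance Definition _ := [Choice of gen by <:].
HB.instance Definition _ :=
  GRing.SubChoice_isSubAlgebra.Build k A P_pred gen P_subalg_closed.

Lemma is_GWA_ind z : P z.
Proof.
(* A maps into the subalgebra [gen]; followed by the inclusion, this map is the
   identity by the uniqueness clause of the universal property. *)
have [[iota_hom yx xy xr ry] U] := A_gwa.
pose gen_iota r := Gen (introT (asboolP _) (Piota r)).
pose gen_x := Gen (introT (asboolP _) Px).
pose gen_y := Gen (introT (asboolP _) Py).
have gen_rel : gwa_rel a s gen_iota gen_x gen_y.
  split; [split=> [u v|c u|u v|] | | | move=> r | move=> r]; apply: val_inj => /=;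
    by rewrite ?(kalg_homD iota_hom, kalg_homZ iota_hom, kalg_homM iota_hom,
                 kalg_hom1 iota_hom).
have [[g [g_hom g_iota g_x g_y]] _] := U _ _ _ _ gen_rel.
have val_hom : is_kalg_hom (gen_val : gen -> A) by [].
have [_ uniq] := U A iota x y (And5 iota_hom yx xy xr ry).
have /= <- := uniq (gen_val \o g) id (kalg_hom_comp g_hom val_hom)
  (fun r => congr1 val (g_iota r)) (congr1 val g_x) (congr1 val g_y)
  (kalg_hom_id A) (fun r => erefl) erefl erefl z.
exact/asboolP/(valP (g z)).
Qed.

End GWAInduction.

Section GWARelations.
Variables (k : fieldType) (h0 : k) (a : {poly k}).
Variables (A : algType k) (iota : {poly k} -> A) (x y : A).
Hypothesis rel : gwa_rel a (shift_sigma h0) iota x y.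
Local Notation sigma := (shift_sigma h0).
Local Notation sigma_inv := (shift_sigma_inv h0).

Lemma gwa_iota_hom : is_kalg_hom iota. Proof. by case: rel. Qed.
Lemma gwa_yx : y * x = iota a. Proof. by case: rel. Qed.
Lemma gwa_xy : x * y = iota (sigma a). Proof. by case: rel. Qed.
Lemma gwa_xr p : x * iota p = iota (sigma p) * x. Proof. by case: rel. Qed.
Lemma gwa_ry p : iota p * y = y * iota (sigma p). Proof. by case: rel. Qed.
Lemma gwa_yr p : y * iota p = iota (sigma_inv p) * y.
Proof. by rewrite gwa_ry shift_sigma_invK. Qed.

Local Notation iotaD := (kalg_homD gwa_iota_hom).
Local Notation iotaM := (kalg_homM gwa_iota_hom).

Lemma gwa_xXr n p : x ^+ n * iota p = iota (iter n sigma p) * x ^+ n.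
Proof.
elim: n p => [|n IH] p; first by rewrite expr0 mul1r mulr1.
by rewrite exprSr -mulrA gwa_xr mulrA IH -mulrA iterSr.
Qed.

Lemma gwa_ryX n p : iota p * y ^+ n = y ^+ n * iota (iter n sigma p).
Proof.
elim: n p => [|n IH] p; first by rewrite expr0 mul1r mulr1.
by rewrite exprS mulrA gwa_ry -mulrA IH mulrA iterSr.
Qed.

Lemma gwa_yXxX n : y ^+ n * x ^+ n = iota (shift_prod h0 a n).
Proof.
elim: n => [|n IH]; first by rewrite mulr1 /shift_prod big_ord0 (kalg_hom1 gwa_iota_hom).
rewrite exprS exprSr mulrA -(mulrA y) IH gwa_yr -mulrA gwa_yx -iotaM.
by rewrite shift_prodS mulrC.
Qed.

Lemma gwa_xXyX n : x ^+ n * y ^+ n = iota (iter n sigma (shift_prod h0 a n)).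
Proof.
elim: n => [|n IH]; first by rewrite mulr1 /shift_prod big_ord0 (kalg_hom1 gwa_iota_hom).
rewrite exprSr exprS mulrA -(mulrA _ x) gwa_xy gwa_xXr -mulrA IH -iotaM.
by rewrite shift_prodS iterSr shift_sigmaM shift_sigma_invK !iter_shift_sigma shift_sigmaM.
Qed.

Inductive gwa_span : A -> Prop :=
| gwa_span0 : gwa_span 0
| gwa_spanX z p n : gwa_span z -> gwa_span (z + iota p * x ^+ n)
| gwa_spanY z p n : gwa_span z -> gwa_span (z + iota p * y ^+ n).

Lemma gwa_spanD u v : gwa_span u -> gwa_span v -> gwa_span (u + v).
Proof.
move=> su; elim=> [|z p n _ IH|z p n _ IH]; rewrite ?addr0 // addrA.
- exact: gwa_spanX.
- exact: gwa_spanY.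
Qed.

Lemma gwa_span_monoX p n : gwa_span (iota p * x ^+ n).
Proof. by rewrite -[_ * _]add0r; apply/gwa_spanX/gwa_span0. Qed.

Lemma gwa_span_monoY p n : gwa_span (iota p * y ^+ n).
Proof. by rewrite -[_ * _]add0r; apply/gwa_spanY/gwa_span0. Qed.

Lemma gwa_span_iotaM q u : gwa_span u -> gwa_span (iota q * u).
Proof.
elim=> [|z p n _ IH|z p n _ IH]; rewrite ?mulr0; first exact: gwa_span0.
- by rewrite mulrDr mulrA -iotaM; apply: gwa_spanX.
- by rewrite mulrDr mulrA -iotaM; apply: gwa_spanY.
Qed.

Lemma gwa_span_xM u : gwa_span u -> gwa_span (x * u).
Proof.
elim=> [|z p n _ IH|z p n _ IH]; rewrite ?mulr0; first exact: gwa_span0.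
- by rewrite mulrDr mulrA gwa_xr -mulrA -exprS; apply: gwa_spanX.
- rewrite mulrDr mulrA gwa_xr; apply: gwa_spanD => //.
  case: n => [|n]; first by rewrite -(expr1 x) mulr1; apply: gwa_span_monoX.
  by rewrite exprS -mulrA (mulrA x) gwa_xy mulrA -iotaM; apply: gwa_span_monoY.
Qed.

Lemma gwa_span_yM u : gwa_span u -> gwa_span (y * u).
Proof.
elim=> [|z p n _ IH|z p n _ IH]; rewrite ?mulr0; first exact: gwa_span0.
- rewrite mulrDr mulrA gwa_yr; apply: gwa_spanD => //.
  case: n => [|n]; first by rewrite -(expr1 y) mulr1; apply: gwa_span_monoY.
  by rewrite exprS -mulrA (mulrA y) gwa_yx mulrA -iotaM; apply: gwa_span_monoX.
- by rewrite mulrDr mulrA gwa_yr -mulrA -exprS; apply: gwa_spanY.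
Qed.

Lemma gwa_span_nf z : gwa_span z -> exists N (p q : nat -> {poly k}),
  forall M, (N <= M)%N ->
    z = \sum_(n < M) (iota (p n) * x ^+ n + iota (q n) * y ^+ n.+1).
Proof.
pose nf u := exists N (p q : nat -> {poly k}), forall M, (N <= M)%N ->
  u = \sum_(n < M) (iota (p n) * x ^+ n + iota (q n) * y ^+ n.+1).
have iota0 := kalg_hom0 gwa_iota_hom.
have sum_delta (F : nat -> A) j M : (j < M)%N ->
    \sum_(n < M) (if n == j :> nat then F n else 0) = F j.
  by move=> jM; rewrite -big_mkcond big_ord1_eq jM.
have nfX u p0 j : nf u -> nf (u + iota p0 * x ^+ j).
  case=> N [p [q uE]].
  exists (maxn N j.+1), (fun n => p n + (if n == j then p0 else 0)), q.
  move=> M; rewrite geq_max => /andP [NM jM].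
  rewrite (uE M NM) -(sum_delta (fun n => iota p0 * x ^+ n) _ _ jM) -big_split.
  apply: eq_bigr => n _ /=; case: eqP => _; rewrite ?iota0 ?mul0r ?addr0 //.
  by rewrite iotaD mulrDl addrAC.
have nfY u p0 j : nf u -> nf (u + iota p0 * y ^+ j.+1).
  case=> N [p [q uE]].
  exists (maxn N j.+1), p, (fun n => q n + (if n == j then p0 else 0)).
  move=> M; rewrite geq_max => /andP [NM jM].
  rewrite (uE M NM) -(sum_delta (fun n => iota p0 * y ^+ n.+1) _ _ jM) -big_split.
  apply: eq_bigr => n _ /=; case: eqP => _; rewrite ?iota0 ?mul0r ?addr0 //.
  by rewrite iotaD mulrDl addrA.
elim=> [|u p0 j _ nfu|u p0 [|j] _ nfu]; [|exact: nfX| |exact: nfY].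
  exists 0%N, (fun=> 0), (fun=> 0) => M _.
  by rewrite big1 // => n _; rewrite iota0 !mul0r addr0.
by rewrite expr0 -(expr0 x); apply: nfX.
Qed.

End GWARelations.

Section GWAStructure.
Variables (k : fieldType) (h0 : k) (a : {poly k}).
Variables (A : algType k) (iota : {poly k} -> A) (x y : A).
Hypothesis A_gwa : is_GWA a (shift_sigma h0) iota x y.

Let iota_hom := gwa_iota_hom A_gwa.1.

Lemma gwa_span_all z : gwa_span iota x y z.
Proof.
(* The span is stable under left multiplication by the generators, hence by all of A. *)
pose P u := forall v, gwa_span iota x y v -> gwa_span iota x y (u * v).
have Pz : P z.
  apply: (is_GWA_ind A_gwa (P := P)) => [v|u1 u2 P1 P2 v|u1 u2 P1 P2 v|c u Pu v|p v|v|v] sv.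
  - by rewrite mul1r.
  - by rewrite mulrDl; apply: gwa_spanD; [apply: P1 | apply: P2].
  - by rewrite -mulrA; apply/P1/P2.
  - rewrite -scalerAl -mulr_algl -(kalg_hom1 iota_hom) -(kalg_homZ iota_hom).
    exact/(gwa_span_iotaM A_gwa.1)/Pu.
  - exact: (gwa_span_iotaM A_gwa.1).
  - exact: (gwa_span_xM A_gwa.1).
  - exact: (gwa_span_yM A_gwa.1).
rewrite -[z]mulr1; apply: Pz.
by rewrite -(kalg_hom1 iota_hom) -[iota 1]mulr1 -(expr0 x); apply: gwa_span_monoX.
Qed.

Lemma gwa_normal_form z : exists N (p q : nat -> {poly k}),
  z = \sum_(n < N) (iota (p n) * x ^+ n + iota (q n) * y ^+ n.+1).
Proof.
have [N [p [q zE]]] := gwa_span_nf A_gwa.1 (gwa_span_all z).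
by exists N, p, q; apply: zE.
Qed.

Lemma gwa_monomials_free d N (p q : nat -> {poly k}) : a != 0 -> (0 < d)%N ->
  \sum_(n < N) (iota (p n) * x ^+ (d * n) + iota (q n) * y ^+ (d * n.+1)) = 0 ->
  forall j, (j < N)%N -> p j = 0 /\ q j = 0.
Proof.
move=> a_neq0 d_gt0 sum0 j jN.
have [[psi [psi_hom psi_iota psi_x psi_y]] _] := A_gwa.2 _ _ _ _ (model_rel h0 a).
(* The degree m component of the image of delta0, computed monomial by monomial. *)
have coef0 m : \sum_(n < N) ((if m == (d * n)%N%:Z then p n else 0) +
    (if m == - (d * n.+1)%N%:Z then q n * shift_prod h0 a (d * n.+1) else 0)) = 0.
  transitivity (psi 0 (delta0 k) m); last by rewrite (kalg_hom0 psi_hom).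
  rewrite -sum0 (kalg_hom_sum psi_hom) lendo_sumE; apply: eq_bigr => n _.
  rewrite (kalg_homD psi_hom) !(kalg_homM psi_hom) !(kalg_homX psi_hom).
  by rewrite !psi_iota psi_x psi_y lendoDE model_monoX model_monoY.
have x_ne_y n n' : ((d * n)%N%:Z == - (d * n'.+1)%N%:Z) = false.
  by apply/negbTE/eqP; nia.
have y_ne_x n n' : (- (d * n'.+1)%N%:Z == (d * n)%N%:Z) = false.
  by rewrite eq_sym x_ne_y.
have delta (F : nat -> {poly k}) : F j = \sum_(n < N) (if n == j :> nat then F n else 0).
  by rewrite -big_mkcond big_ord1_eq jN.
split.
  rewrite (delta p) -[RHS](coef0 (d * j)%N%:Z); apply: eq_bigr => n _.
  by rewrite x_ne_y addr0 eqz_nat eqn_pmul2l // eq_sym.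
have : q j * shift_prod h0 a (d * j.+1) = 0.
  rewrite (delta (fun n => q n * shift_prod h0 a (d * n.+1))).
  rewrite -[RHS](coef0 (- (d * j.+1)%N%:Z)).
  apply: eq_bigr => n _.
  by rewrite y_ne_x add0r eqr_opp eqz_nat eqn_pmul2l // eqSS eq_sym.
by move/eqP; rewrite mulf_eq0 (negbTE (shift_prod_neq0 _ _ a_neq0)) orbF => /eqP.
Qed.
End GWAStructure.

Section Veronese.
Variables (k : fieldType) (h0 : k) (a : {poly k}) (r : nat).
Hypothesis r_neq0 : r%:R != 0 :> k.
Variables (A : algType k) (iota : {poly k} -> A) (x y : A).
Local Notation dilateV p := (p \Po (r%:R^-1 *: 'X)).

Lemma veronese_rel : gwa_rel a (shift_sigma h0) iota x y ->
  gwa_rel (a_tilde h0 r a) (shift_sigma h0) (fun p => iota (dilateV p)) (x ^+ r) (y ^+ r).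
Proof.
move=> rel; have iota_hom := gwa_iota_hom rel.
have shift_dilateV p : dilateV (shift_sigma h0 p) = iter r (shift_sigma h0) (dilateV p).
  by rewrite shift_sigma_dilate ?invr_neq0 // invrK iter_shift_sigma mulrC.
split.
- exact: kalg_hom_comp (comp_poly_kalg_hom _) iota_hom.
- by rewrite (gwa_yXxX rel) a_tilde_dilate.
- by rewrite (gwa_xXyX rel) shift_dilateV a_tilde_dilate.
- by move=> p; rewrite (gwa_xXr rel) shift_dilateV.
- by move=> p; rewrite (gwa_ryX rel) shift_dilateV.
Qed.

Variables (B : algType k) (iotaB : {poly k} -> B) (X Y : B).
Hypotheses (A_gwa : is_GWA a (shift_sigma h0) iota x y)
  (B_gwa : is_GWA (a_tilde h0 r a) (shift_sigma h0) iotaB X Y).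
Variable phi : B -> A.
Hypotheses (phi_hom : is_kalg_hom phi) (phi_iota : forall p, phi (iotaB p) = iota (dilateV p))
  (phi_X : phi X = x ^+ r) (phi_Y : phi Y = y ^+ r).

Lemma veronese_injective : a != 0 -> injective phi.
Proof.
move=> a_neq0 b1 b2 phi_eq; apply/eqP; rewrite -subr_eq0; apply/eqP.
have [N [p [q bE]]] := gwa_normal_form B_gwa (b1 - b2).
have phi_nf : \sum_(n < N) (iota (dilateV (p n)) * x ^+ (r * n) +
    iota (dilateV (q n)) * y ^+ (r * n.+1)) = 0.
  rewrite -[RHS](subrr (phi b2)) -{1}phi_eq -(kalg_homB phi_hom) bE (kalg_hom_sum phi_hom).
  apply: eq_bigr => n _; rewrite (kalg_homD phi_hom) !(kalg_homM phi_hom).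
  by rewrite !(kalg_homX phi_hom) !phi_iota phi_X phi_Y -!exprM.
have r_gt0 : (0 < r)%N by rewrite lt0n; apply: contraNneq r_neq0 => ->.
rewrite bE big1 // => n _.
have [/eqP pn0 /eqP qn0] := gwa_monomials_free A_gwa (p := fun n => dilateV (p n))
  (q := fun n => dilateV (q n)) a_neq0 r_gt0 phi_nf (ltn_ord n).
move: pn0 qn0; rewrite !dilate_eq0 ?invr_neq0 // => /eqP -> /eqP ->.
by rewrite (kalg_hom0 (gwa_iota_hom B_gwa.1)) !mul0r addr0.
Qed.

Variables (theta : A -> A) (w : k).
Hypotheses (theta_hom : is_kalg_hom theta) (theta_x : theta x = w *: x)
  (theta_y : theta y = w^-1 *: y) (theta_h : theta (iota 'X) = iota 'X).
Hypothesis w_prim : r.-primitive_root w.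

Let iota_hom := gwa_iota_hom A_gwa.1.

Lemma theta_iota p : theta (iota p) = iota p.
Proof. exact: (kalg_hom_poly_eq (kalg_hom_comp iota_hom theta_hom) iota_hom theta_h). Qed.

Lemma theta_phi b : theta (phi b) = phi b.
Proof.
have wr1 := prim_expr_order w_prim.
have [[_ _] uniq] := B_gwa.2 A _ _ _ (veronese_rel A_gwa.1).
apply: (uniq (theta \o phi) phi) => //.
- exact: kalg_hom_comp phi_hom theta_hom.
- by move=> p /=; rewrite phi_iota theta_iota.
- by rewrite /= phi_X (kalg_homX theta_hom) theta_x exprZn wr1 scale1r.
- by rewrite /= phi_Y (kalg_homX theta_hom) theta_y exprZn exprVn wr1 invr1 scale1r.
Qed.

Lemma reynolds_monomial_in_image (t : A) (T : B) (c : k) p n :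
  phi T = t ^+ r -> theta t = c *: t -> (forall m, (c ^+ m == 1) = (r %| m)%N) ->
  exists b, phi b = reynolds theta r (iota p * t ^+ n).
Proof.
move=> phi_T t_eigen c_order.
have iter_iota i : iter i theta (iota p) = iota p by elim: i => //= i ->; apply: theta_iota.
have iter_hom i := kalg_hom_iter i theta_hom.
rewrite (reynolds_eigen r_neq0 (c := c ^+ n)); first last.
- move=> i; rewrite (kalg_homM (iter_hom i)) iter_iota (kalg_homX (iter_hom i)).
  by rewrite (iter_eigen theta_hom _ t_eigen) exprZn -scalerAr exprAC.
- by rewrite exprAC (eqP (_ : c ^+ r == 1)) ?expr1n ?c_order.
case: ifPn => [|_]; last by exists 0; rewrite (kalg_hom0 phi_hom).
rewrite c_order => /dvdnP [m ->].
exists (iotaB (p \Po (r%:R *: 'X)) * T ^+ m).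
by rewrite (kalg_homM phi_hom) phi_iota dilateK // (kalg_homX phi_hom) phi_T -exprM mulnC.
Qed.

Lemma invariant_in_image z : (forall i : 'I_r, iter i theta z = z) -> exists b, phi b = z.
Proof.
move=> z_fixed; rewrite -(reynolds_fixed r_neq0 z_fixed).
have w_order m : (w ^+ m == 1) = (r %| m)%N by rewrite (prim_order_dvd w_prim).
have wV_order m : (w^-1 ^+ m == 1) = (r %| m)%N by rewrite exprVn invr_eq1.
elim: (gwa_span_all A_gwa z) => [|u p n _ [b1 E1]|u p n _ [b1 E1]].
- by exists 0; rewrite (kalg_hom0 phi_hom) reynolds0.
- have [b2 E2] := reynolds_monomial_in_image p n phi_X theta_x w_order.
  by exists (b1 + b2); rewrite (kalg_homD phi_hom) E1 E2 reynoldsD.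
- have [b2 E2] := reynolds_monomial_in_image p n phi_Y theta_y wV_order.
  by exists (b1 + b2); rewrite (kalg_homD phi_hom) E1 E2 reynoldsD.
Qed.

End Veronese.

Unset Implicit Arguments. Set Strict Implicit. Set Printing Implicit Defensive.

Theorem lemma4p1 (k : fieldType) (char0 : [pchar k] =i pred0)
  (a : {poly k}) (a_nonconst : (1 < size a)%N)
  (h0 : k) (h0_nz : h0 != 0)
  (r : nat) (r_pos : (0 < r)%N) (w : k) (w_prim : r.-primitive_root w)
  (A : algType k) (iota : {poly k} -> A) (x y : A)
  (A_gwa : is_GWA a (shift_sigma h0) iota x y)
  (theta : A -> A)
  (theta_hom : is_kalg_hom theta)
  (theta_x : theta x = w *: x) (theta_y : theta y = w^-1 *: y)
  (theta_h : theta (iota 'X) = iota 'X)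
  (B : algType k) (iotaB : {poly k} -> B) (X Y : B)
  (B_gwa : is_GWA (a_tilde h0 r a) (shift_sigma h0) iotaB X Y) :
  exists phi : B -> A,
    [/\ is_kalg_hom phi, injective phi
      & forall z : A, (forall i : 'I_r, iter i theta z = z) <-> exists b, phi b = z].
Proof.
have r_neq0 := prim_root_natf_neq0 w_prim.
have a_neq0 : a != 0 by rewrite -size_poly_gt0 (ltn_trans _ a_nonconst).
have [[phi [phi_hom phi_iota phi_X phi_Y]] _] :=
  B_gwa.2 A _ _ _ (veronese_rel r_neq0 A_gwa.1).
exists phi; split=> // [|z].
  exact: (veronese_injective r_neq0 A_gwa B_gwa phi_hom phi_iota phi_X phi_Y a_neq0).
split; first exact: (invariant_in_image r_neq0 A_gwa phi_hom phi_iota phi_X phi_Y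
  theta_hom theta_x theta_y theta_h w_prim).
case=> b <- i; elim: (nat_of_ord i) => //= n ->.
exact: (theta_phi r_neq0 A_gwa B_gwa phi_hom phi_iota phi_X phi_Y theta_hom
  theta_x theta_y theta_h w_prim).
Qed.
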